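(* Let $S$ be a random walk on $\mathbb{Z}^2$ with symmetric, sub-Gaussian increments and let $\mathsf c\in[1,\infty)$ be as in the context. For every $f:\mathbb{Z}^2\to\mathbb{R}$, $t\ge0$, $n\in\mathbb{N}$ and $p\in[1,\infty]$, $$\Big\|\frac{q^f_n}{w_t}\Big\|_{\ell^p}\le\mathsf c\,e^{2\mathsf ct^2n}\Big\|\frac f{w_t}\Big\|_{\ell^p},\qquad\Big\|\frac{q^f_n}{w_t}\Big\|_{\ell^\infty}\le\frac{\mathsf c\,e^{2\mathsf ct^2n}}{n^{1/p}}\Big\|\frac f{w_t}\Big\|_{\ell^p},$$ with the convention $n^{1/\infty}:=1$.
   Context: Assumption on the walk: $q_1(x)=q_1(-x)$ and there is $c>0$ with $\sum_xe^{tx^a}q_1(x)\le e^{ct^2/2}$ for all $t\in\mathbb{R}$, $a=1,2$. Here $q_n(x):=\mathrm{P}(S_n=x\mid S_0=0)$, $q^f_n(x):=\sum_{z\in\mathbb{Z}^2}q_n(x-z)f(z)$, $w_t(x):=e^{-t|x|}$, and $\|\cdot\|_{\ell^p}$ is the $\ell^p(\mathbb{Z}^2)$ norm. $\mathsf c\in[1,\infty)$ is a constant (depending only on the walk) such that for all $t\ge0$, $n\in\mathbb{N}$, $a=1,2$: $\sum_xe^{tx^a}q_n(x)\le e^{\mathsf ct^2n/2}$, $\sum_xe^{tx^a}q_n(x)^2/q_{2n}(0)\le e^{\mathsf ct^2n/2}$, $\sum_xe^{t|x|}q_n(x)\le\mathsf ce^{2\mathsf ct^2n}$, $\sup_xe^{t|x|}q_n(x)\le\mathsf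 ce^{2\mathsf ct^2n}/n$ (such a constant exists). *)

From HB Require Import structures.
From mathcomp Require Import all_boot all_order all_algebra.
From mathcomp Require Import all_classical all_reals.
From mathcomp Require Import ereal topology normedtype sequences esum exp.
Set Implicit Arguments. Unset Strict Implicit. Unset Printing Implicit Defensive.
Import Order.TTheory GRing.Theory Num.Theory.
Local Open Scope classical_set_scope.
Local Open Scope ring_scope.

Definition Z2 := (int * int)%type.

Section Defs.
Variable R : realType.

Definition Z2_0 : Z2 := (0%Z, 0%Z).
Definition Z2_sub (x z : Z2) : Z2 := ((x.1 - z.1)%R, (x.2 - z.2)%R).
Definition Z2_opp (x : Z2) : Z2 := ((- x.1)%R, (- x.2)%R).
(* coordinate x^a, a = 1,2 (encoded by a : 'I_2, a = 0 <-> first coordinate) *)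
Definition Z2_coord (a : 'I_2) (x : Z2) : R :=
  if (a == 0 :> nat) then (x.1)%:~R else (x.2)%:~R.
Definition Z2_norm (x : Z2) : R := Num.sqrt ((x.1)%:~R ^+ 2 + (x.2)%:~R ^+ 2).

Definition esumZ2 (g : Z2 -> \bar R) : \bar R := \esum_(x in [set: Z2]) g x.

(* sum over Z^2 of a real family (meaningful for absolutely summable families):
   sum of positive parts minus sum of negative parts *)
Definition sumZ2 (g : Z2 -> R) : R :=
  fine (esumZ2 (fun x => (Num.max (g x) 0)%:E))
  - fine (esumZ2 (fun x => (Num.max (- g x) 0)%:E)).

(* q_n(x) = P(S_n = x | S_0 = 0), as the n-fold convolution of the step law q1 *)
Definition delta0 (x : Z2) : R := if x == Z2_0 then 1 else 0.
Definition qn (q1 : Z2 -> R) (n : nat) : Z2 -> R :=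
  iter n (fun q x => sumZ2 (fun z => q (Z2_sub x z) * q1 z)) delta0.

Definition qfn (q1 : Z2 -> R) (n : nat) (f : Z2 -> R) (x : Z2) : R :=
  sumZ2 (fun z => qn q1 n (Z2_sub x z) * f z).

Definition wt (t : R) (x : Z2) : R := expR (- (t * Z2_norm x)).

Definition lpnorm (p : \bar R) (g : Z2 -> R) : \bar R :=
  if p == +oo%E then ereal_sup [set (`|g x|)%:E | x in [set: Z2]]
  else poweR (esumZ2 (fun x => (`|g x| `^ fine p)%:E)) (fine p)^-1.

Definition nroot_p (n : nat) (p : \bar R) : R :=
  if p == +oo%E then 1 else n%:R `^ (fine p)^-1.

End Defs.

From HB Require Import structures.
From mathcomp Require Import all_boot all_order all_algebra.
From mathcomp Require Import all_classical all_reals.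
From mathcomp Require Import ereal topology normedtype sequences esum exp.
From mathcomp Require Import numfun complex ring lra.
Import Order.TTheory GRing.Theory Num.Theory.
Local Open Scope classical_set_scope.
Local Open Scope ring_scope.
Set Implicit Arguments. Unset Strict Implicit. Unset Printing Implicit Defensive.

(* Since |x| <= |x - z| + |z|, the weight satisfies 1/w_t(x) <= 1/w_t(x - z) 1/w_t(z),
   so |q^f_n / w_t| is dominated pointwise by the convolution of g := |f / w_t| with
   the kernel K(y) := e^{t|y|} q_n(y), whose mass is at most C := c e^{2ct^2n} and
   whose supremum is at most C/n.  Integrating the tangent-line inequality of the
   convex map s |-> s^p against K gives Jensen's inequality
   (K*g)^p <= C^(p-1) K*(g^p).  Summing over x (Fubini) yields the l^p bound, and
   bounding K by C/n inside K*(g^p) yields the l^p -> l^oo bound. *)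

Section esumZ2.
Context {R : realType}.
Local Open Scope ereal_scope.
Implicit Types (a b : Z2 -> \bar R) (k : R).

Lemma esumZ2_ge0 a : (forall x, 0 <= a x) -> 0 <= esumZ2 a.
Proof. by move=> a0; apply: esum_ge0 => x _. Qed.

Lemma le_esumZ2 a b : (forall x, a x <= b x) -> esumZ2 a <= esumZ2 b.
Proof. by move=> ab; apply: le_esum => x _. Qed.

Lemma esumZ2D a b : (forall x, 0 <= a x) -> (forall x, 0 <= b x) ->
  esumZ2 (fun x => a x + b x) = esumZ2 a + esumZ2 b.
Proof. by move=> a0 b0; apply: esumD => x _. Qed.

Lemma esumZ2Zl k a : (0 <= k)%R -> (forall x, 0 <= a x) ->
  esumZ2 (fun x => k%:E * a x) = k%:E * esumZ2 a.
Proof.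
move=> k0 a0; rewrite /esumZ2 /esum -ereal_supZl//; last first.
  by apply/set0P; exists 0; exists set0; [exact: fsets_set0 | rewrite fsbig_set0].
rewrite image_comp; congr ereal_sup.
by apply: eq_imagel => A _ /=; rewrite ge0_mule_fsumr.
Qed.

Lemma esumZ2_bij (e : Z2 -> Z2) a : bijective e ->
  esumZ2 (fun x => a (e x)) = esumZ2 a.
Proof.
by move=> be; rewrite /esumZ2 [RHS](reindex_esum [set: Z2] [set: Z2] e)// setTT_bijective.
Qed.

Lemma esumZ2_subl x a : esumZ2 (fun z => a (Z2_sub x z)) = esumZ2 a.
Proof.
apply: esumZ2_bij; exists (Z2_sub x) => z;
  by rewrite /Z2_sub /= !subKr -surjective_pairing.
Qed.

Lemma esumZ2_subr z a : esumZ2 (fun x => a (Z2_sub x z)) = esumZ2 a.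
Proof.
apply: esumZ2_bij; exists (Z2_sub^~ (Z2_opp z)) => x;
  by rewrite /Z2_sub /= ?opprK ?subrK ?addrK -surjective_pairing.
Qed.

Lemma esumZ2C (a : Z2 -> Z2 -> \bar R) : (forall x y, 0 <= a x y) ->
  esumZ2 (fun x => esumZ2 (a x)) = esumZ2 (fun y => esumZ2 (a^~ y)).
Proof.
move=> a0; rewrite /esumZ2 !esum_esum//.
have -> : [set: Z2] `*`` (fun=> [set: Z2]) = [set: Z2 * Z2] by apply/seteqP.
rewrite [RHS](reindex_esum [set: Z2 * Z2] [set: Z2 * Z2] (fun k : Z2 * Z2 => (k.2, k.1)))//.
by rewrite setTT_bijective; exists (fun k : Z2 * Z2 => (k.2, k.1)) => -[].
Qed.

End esumZ2.

Section sumZ2.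
Context {R : realType}.
Implicit Types h : Z2 -> R.

Lemma sumZ2_ge0 h : (forall x, 0 <= h x) -> 0 <= sumZ2 h.
Proof.
move=> h0; rewrite /sumZ2 [X in _ - fine X](_ : _ = 0%E) ?subr0; last first.
  by apply: esum1 => x _; rewrite max_r// oppr_le0.
by apply/fine_ge0/esumZ2_ge0 => x; rewrite lee_fin le_max lexx orbT.
Qed.

Lemma normr_sumZ2_le h : (`|sumZ2 h|%:E <= esumZ2 (fun x => `|h x|%:E))%E.
Proof.
have -> : esumZ2 (fun x => `|h x|%:E) =
    (esumZ2 (fun x => (h^\+ x)%:E) + esumZ2 (fun x => (h^\- x)%:E))%E.
  rewrite -esumZ2D => [|x|x]; rewrite ?lee_fin ?funrpos_ge0 ?funrneg_ge0//.
  apply: eq_esum => x _; rewrite -EFinD; congr (_%:E).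
  by rewrite -[RHS]/((h^\+ + h^\-) x) funrposDneg.
rewrite /sumZ2 -/(funrpos h) -/(funrneg h).
have: (0 <= esumZ2 (fun x => (h^\+ x)%:E))%E.
  by apply: esumZ2_ge0 => x; rewrite lee_fin funrpos_ge0.
have: (0 <= esumZ2 (fun x => (h^\- x)%:E))%E.
  by apply: esumZ2_ge0 => x; rewrite lee_fin funrneg_ge0.
case: (esumZ2 (fun x => (h^\+ x)%:E)) => [p| |]//;
  case: (esumZ2 (fun x => (h^\- x)%:E)) => [m| |]//= m0 p0; rewrite ?leey//.
by rewrite lee_fin (le_trans (ler_normB _ _))// !ger0_norm -?lee_fin.
Qed.

End sumZ2.

Lemma powR_tangent_le (R : realType) (P m g : R) : 1 <= P -> 0 <= m -> 0 <= g ->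
  P * m `^ (P - 1) * g <= (P - 1) * m `^ P + g `^ P.
Proof.
move=> P1 m0 g0; have [->|P1'] := eqVneq P 1.
  by rewrite subrr powRr0 mul0r add0r powRr1// !mul1r.
have P1s : 1 < P by rewrite lt_def P1' P1.
have Pm1 : 0 < P - 1 by rewrite subr_gt0.
have P0 : 0 < P := lt_trans ltr01 P1s.
(* Young's inequality with the conjugate exponent P / (P - 1) *)
have := conjugate_powR g0 (powR_ge0 m (P - 1)) P0 (divr_gt0 P0 Pm1).
rewrite -powRrM mulrCA divff ?gt_eqF// mulr1.
have -> : P^-1 + (P / (P - 1))^-1 = 1 by field; rewrite !gt_eqF.
move=> /(_ erefl) /(ler_wpM2l (ltW P0)).
have -> : P * (g `^ P / P + m `^ P / (P / (P - 1))) = (P - 1) * m `^ P + g `^ P.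
  by field; rewrite !gt_eqF.
by rewrite -mulrA [m `^ _ * g]mulrC.
Qed.

Definition econvZ2 {R : realType} (K H : Z2 -> R) (x : Z2) : \bar R :=
  esumZ2 (fun z => (K (Z2_sub x z) * H z)%:E).

Section Young.
Context {R : realType}.
Variables (K : Z2 -> R) (C : R).
Hypotheses (K_ge0 : forall y, 0 <= K y) (C_gt0 : 0 < C)
  (esumK_le : (esumZ2 (fun y => (K y)%:E) <= C%:E)%E).
Implicit Types (H : Z2 -> R) (P m a : R).
Local Open Scope ereal_scope.

Lemma econvZ2_ge0 H x : (forall z, 0 <= H z)%R -> 0 <= econvZ2 K H x.
Proof. by move=> H0; apply: esumZ2_ge0 => z; rewrite lee_fin mulr_ge0. Qed.

Lemma esumZ2_shiftK_le x : esumZ2 (fun z => (K (Z2_sub x z))%:E) <= C%:E.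
Proof. by rewrite (esumZ2_subl x (fun y => (K y)%:E)). Qed.

Lemma econvZ2_le_mass H m x : (forall z, 0 <= H z <= m)%R ->
  econvZ2 K H x <= (m * C)%:E.
Proof.
move=> Hm; have m0 : (0 <= m)%R by have /andP[/le_trans] := Hm Z2_0; apply.
apply: (@le_trans _ _ (esumZ2 (fun z => m%:E * (K (Z2_sub x z))%:E))).
  apply: le_esumZ2 => z; rewrite -EFinM lee_fin mulrC ler_wpM2r//.
  by have /andP[] := Hm z.
rewrite esumZ2Zl//; last by move=> z; rewrite lee_fin.
by rewrite EFinM lee_wpmul2l ?lee_fin// esumZ2_shiftK_le.
Qed.

Lemma econvZ2_le_sup H M x : (forall y, K y <= M)%R -> (forall z, 0 <= H z)%R ->
  econvZ2 K H x <= M%:E * esumZ2 (fun z => (H z)%:E).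
Proof.
move=> KM H0; have M0 : (0 <= M)%R := le_trans (K_ge0 Z2_0) (KM Z2_0).
rewrite -esumZ2Zl//.
by apply: le_esumZ2 => z; rewrite -EFinM lee_fin ler_wpM2r.
Qed.

Lemma esumZ2_econvZ2_le H : (forall z, 0 <= H z)%R ->
  esumZ2 (econvZ2 K H) <= C%:E * esumZ2 (fun z => (H z)%:E).
Proof.
move=> H0; rewrite /econvZ2 esumZ2C => [|x z]; last by rewrite lee_fin mulr_ge0.
rewrite -esumZ2Zl ?(ltW C_gt0)//; apply: le_esumZ2 => z.
rewrite (_ : (fun x => _) = fun x => (H z)%:E * (K (Z2_sub x z))%:E); last first.
  by apply/funext => x; rewrite EFinM muleC.
rewrite esumZ2Zl//; last by move=> x; rewrite lee_fin.
rewrite muleC lee_wpmul2r ?lee_fin//.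
by rewrite (esumZ2_subr z (fun y => (K y)%:E)).
Qed.

Lemma econvZ2_tangent H P m x : (1 <= P)%R -> (0 <= m)%R -> (forall z, 0 <= H z)%R ->
  (P * m `^ (P - 1))%:E * econvZ2 K H x <=
  ((P - 1) * m `^ P * C)%:E + econvZ2 K (fun z => (H z `^ P)%R) x.
Proof.
move=> P1 m0 H0; have Pm1 : (0 <= P - 1)%R by rewrite subr_ge0.
have slope0 : (0 <= P * m `^ (P - 1))%R by rewrite mulr_ge0 ?powR_ge0// (le_trans ler01).
rewrite /econvZ2 -esumZ2Zl//; last by move=> z; rewrite lee_fin mulr_ge0.
apply: (@le_trans _ _ (esumZ2 (fun z => ((P - 1) * m `^ P)%:E * (K (Z2_sub x z))%:E
    + (K (Z2_sub x z) * H z `^ P)%:E))).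
  apply: le_esumZ2 => z; rewrite -!EFinM -EFinD lee_fin.
  set k := K (Z2_sub x z).
  have -> : (P * m `^ (P - 1) * (k * H z) = k * (P * m `^ (P - 1) * H z))%R by ring.
  have -> : ((P - 1) * m `^ P * k + k * H z `^ P = k * ((P - 1) * m `^ P + H z `^ P))%R.
    by ring.
  by apply: ler_wpM2l; [exact: K_ge0 | exact: powR_tangent_le].
rewrite esumZ2D => [|z|z]; last 2 first.
- by rewrite -EFinM lee_fin !mulr_ge0 ?powR_ge0.
- by rewrite lee_fin mulr_ge0 ?powR_ge0.
rewrite esumZ2Zl ?mulr_ge0 ?powR_ge0//; last by move=> z; rewrite lee_fin.
by rewrite leeD2r// (EFinM _ C) lee_wpmul2l ?lee_fin ?mulr_ge0 ?powR_ge0// esumZ2_shiftK_le.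
Qed.

Lemma powR_le_econvZ2 H P a x : (1 <= P)%R -> (forall z, 0 <= H z)%R -> (0 <= a)%R ->
  a%:E <= econvZ2 K H x ->
  (a `^ P)%:E <= (C `^ (P - 1))%:E * econvZ2 K (fun z => (H z `^ P)%R) x.
Proof.
move=> P1 H0 a0 aH; have P0 : (0 < P)%R := lt_le_trans ltr01 P1.
have E0 : 0 <= econvZ2 K (fun z => (H z `^ P)%R) x.
  by apply: econvZ2_ge0 => z; exact: powR_ge0.
have [->|a_neq0] := eqVneq a 0%R.
  by rewrite powR0 ?gt_eqF// mule_ge0// lee_fin powR_ge0.
(* the tangent at m := a / C is sharp *)
pose m := (a / C)%R; have m_gt0 : (0 < m)%R by rewrite divr_gt0// lt0r a_neq0.
have a_mC : a = (m * C)%R by rewrite divfK ?gt_eqF.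
have slope0 : (0 <= P * m `^ (P - 1))%R by rewrite mulr_ge0 ?powR_ge0 ?ltW.
have := lee_wpmul2l (slope0 : 0 <= (P * m `^ (P - 1))%:E) aH.
move=> /le_trans /(_ (econvZ2_tangent x P1 (ltW m_gt0) H0)).
move: E0; case: (econvZ2 K _ x) => [e| |]// e0; last first.
  by rewrite gt0_muley ?leey// lte_fin powR_gt0.
rewrite -EFinM -EFinD lee_fin => tangent.
have slope_a : (P * m `^ (P - 1) * a = P * (m `^ P * C))%R.
  rewrite a_mC -mulrA (mulrA (m `^ (P - 1))%R) [(m `^ _ * m)%R]mulrC.
  by rewrite mulr_powRB1 ?(ltW m_gt0).
have mPC_le : (m `^ P * C <= e)%R by rewrite slope_a in tangent; lra.
rewrite -EFinM lee_fin a_mC (powRM _ (ltW m_gt0) (ltW C_gt0)).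
rewrite -(mulr_powRB1 (ltW C_gt0) P0) mulrA.
by rewrite [X in (X <= _)%R]mulrC ler_wpM2l ?powR_ge0.
Qed.

Variables (F g : Z2 -> R).
Hypothesis F_le_econv : forall x, `|F x|%:E <= econvZ2 K (fun z => `|g z|%R) x.

Lemma esumZ2_powR_le P : (1 <= P)%R ->
  esumZ2 (fun x => (`|F x| `^ P)%:E) <=
  (C `^ P)%:E * esumZ2 (fun z => (`|g z| `^ P)%:E).
Proof.
move=> P1; have P0 : (0 < P)%R := lt_le_trans ltr01 P1.
apply: (@le_trans _ _ (esumZ2 (fun x =>
    (C `^ (P - 1))%:E * econvZ2 K (fun z => (`|g z| `^ P)%R) x))).
  by apply: le_esumZ2 => x; apply: powR_le_econvZ2.
rewrite esumZ2Zl ?powR_ge0//; last by move=> x; apply: econvZ2_ge0 => z; exact: powR_ge0.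
rewrite -(mulr_powRB1 (ltW C_gt0) P0) [(C * _)%R]mulrC EFinM -muleA.
by rewrite lee_wpmul2l ?lee_fin ?powR_ge0// esumZ2_econvZ2_le// => z; exact: powR_ge0.
Qed.

Lemma young_lp P : (1 <= P)%R -> lpnorm P%:E F <= C%:E * lpnorm P%:E g.
Proof.
move=> P1; have P0 : (0 < P)%R := lt_le_trans ltr01 P1.
rewrite /lpnorm /=.
apply: (@le_trans _ _ (((C `^ P)%:E * esumZ2 (fun z => (`|g z| `^ P)%:E)) `^ P^-1)).
  apply: gt0_ler_poweR; first by rewrite invr_ge0 ltW.
  - by rewrite in_itv /= leey andbT; apply: esumZ2_ge0 => x; rewrite lee_fin powR_ge0.
  - rewrite in_itv /= leey andbT mule_ge0 ?lee_fin ?powR_ge0//.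
    by apply: esumZ2_ge0 => x; rewrite lee_fin powR_ge0.
  exact: esumZ2_powR_le.
rewrite poweRM ?lee_fin ?powR_ge0//; last first.
  by apply: esumZ2_ge0 => x; rewrite lee_fin powR_ge0.
by rewrite poweR_EFin -powRrM divff ?gt_eqF// powRr1// ltW.
Qed.

Lemma young_linfty : lpnorm +oo F <= C%:E * lpnorm +oo g.
Proof.
rewrite /lpnorm /=; set M := (X in _ <= _ * X).
have gM z : `|g z|%:E <= M by apply: ereal_sup_ubound; exists z.
have M0 : 0 <= M by apply: le_trans (gM Z2_0); rewrite lee_fin.
move: M0 gM; case: M => [m| |]// m0 gm; last by rewrite gt0_muley ?leey ?lte_fin.
apply: ge_ereal_sup => _ [x _ <-]; rewrite (le_trans (F_le_econv x))// muleC -EFinM.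
by apply: econvZ2_le_mass => z; rewrite normr_ge0 -lee_fin gm.
Qed.

Lemma young_lp_linfty P M : (1 <= P)%R -> (0 < M)%R -> (forall y, K y <= M)%R ->
  lpnorm +oo F <= (C `^ (1 - P^-1) * M `^ P^-1)%:E * lpnorm P%:E g.
Proof.
move=> P1 M_gt0 KM; have P0 : (0 < P)%R := lt_le_trans ltr01 P1.
rewrite /lpnorm /=; apply: ge_ereal_sup => _ [x _ <-].
set S := esumZ2 _.
have S0 : 0 <= S by apply: esumZ2_ge0 => z; rewrite lee_fin powR_ge0.
have FxP : (`|F x| `^ P)%:E <= (C `^ (P - 1) * M)%:E * S.
  rewrite EFinM -muleA (le_trans (powR_le_econvZ2 _ _ _ (F_le_econv x)))//.
  by rewrite lee_wpmul2l ?lee_fin ?powR_ge0// econvZ2_le_sup// => z; exact: powR_ge0.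
move: S0 FxP; case: S => [s| |]// s0 FxP; last first.
  by rewrite poweRyr ?invr_neq0 ?gt_eqF// gt0_muley ?leey// lte_fin mulr_gt0// powR_gt0.
rewrite poweR_EFin -EFinM lee_fin; rewrite -EFinM lee_fin in FxP.
have Pinv0 : (0 <= P^-1)%R by rewrite invr_ge0 ltW.
have -> : `|F x|%R = ((`|F x| `^ P) `^ P^-1)%R.
  by rewrite -powRrM divff ?(lt0r_neq0 P0)// powRr1.
apply: le_trans (ge0_ler_powR Pinv0 _ _ FxP) _; rewrite ?nnegrE ?powR_ge0//.
  by rewrite !mulr_ge0 ?powR_ge0 ?(ltW M_gt0).
rewrite !powRM ?mulr_ge0 ?powR_ge0 ?(ltW M_gt0)// -powRrM.
by rewrite mulrBl divff ?mul1r ?(lt0r_neq0 P0).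
Qed.

End Young.

Section WeightedRandomWalk.
Context {R : realType}.
Implicit Types (t : R) (x z : Z2).

Lemma Z2_norm_subadd x z : Z2_norm R x <= Z2_norm R (Z2_sub x z) + Z2_norm R z.
Proof.
(* |x| is the modulus of the complex number x.1 + i x.2 *)
have := @le_normcD R ((x.1 - z.1)%:~R +i* (x.2 - z.2)%:~R)%C (z.1%:~R +i* z.2%:~R)%C.
by rewrite /Z2_norm /= !intrD !intrN !subrK.
Qed.

Lemma expR_norm_le_mul t x z : 0 <= t ->
  expR (t * Z2_norm R x) <= expR (t * Z2_norm R (Z2_sub x z)) * expR (t * Z2_norm R z).
Proof. by move=> t0; rewrite -expRD ler_expR -mulrDr ler_wpM2l// Z2_norm_subadd. Qed.

Lemma divr_wt t x (a : R) : a / wt t x = a * expR (t * Z2_norm R x).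
Proof. by rewrite /wt expRN invrK. Qed.

Variable q1 : Z2 -> R.
Hypothesis q1_ge0 : forall x, 0 <= q1 x.

Lemma qn_ge0 n x : 0 <= qn q1 n x.
Proof.
elim: n x => [|n IH] x; first by rewrite /qn /= /delta0; case: ifP.
by rewrite /qn iterS -/(qn q1 n); apply: sumZ2_ge0 => z; rewrite mulr_ge0.
Qed.

Lemma weighted_qfn_le_econvZ2 n f t x : 0 <= t ->
  (`|qfn q1 n f x / wt t x|%:E <=
   econvZ2 (fun y => expR (t * Z2_norm R y) * qn q1 n y)%R
     (fun z => `|f z / wt t z|%R) x)%E.
Proof.
move=> t0; rewrite divr_wt normrM (ger0_norm (expR_ge0 _)) mulrC EFinM.
rewrite (le_trans (lee_wpmul2l _ (normr_sumZ2_le _))) ?lee_fin ?expR_ge0//.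
rewrite -esumZ2Zl ?expR_ge0//; apply: le_esumZ2 => z; rewrite -EFinM lee_fin.
rewrite divr_wt !normrM !(ger0_norm (expR_ge0 _)) (ger0_norm (qn_ge0 _ _)).
set qf := (qn q1 n (Z2_sub x z) * `|f z|).
have -> : expR (t * Z2_norm R (Z2_sub x z)) * qn q1 n (Z2_sub x z) *
    (`|f z| * expR (t * Z2_norm R z)) =
  expR (t * Z2_norm R (Z2_sub x z)) * expR (t * Z2_norm R z) * qf by rewrite /qf; ring.
by rewrite ler_wpM2r ?mulr_ge0 ?qn_ge0// expR_norm_le_mul.
Qed.

End WeightedRandomWalk.

Lemma powR_geometric_mean_div (R : realType) (C N r : R) : 0 < C -> 0 < N ->
  C `^ (1 - r) * (C / N) `^ r = C / N `^ r.
Proof.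
move=> C_gt0 N_gt0; have C_ge0 := ltW C_gt0; have N_ge0 := ltW N_gt0.
rewrite powRM ?invr_ge0// mulrA -powRD ?(gt_eqF C_gt0) ?implybT// subrK powRr1//.
by rewrite -(powR_inv1 N_ge0) powRAC powR_inv1 ?powR_ge0.
Qed.

Unset Implicit Arguments.
Theorem lemma4p17 (R : realType) (q1 : Z2 -> R)
  (* q1 is the law of the increments: a probability distribution on Z^2 *)
  (q1_ge0 : forall x, 0 <= q1 x)
  (q1_sum1 : esumZ2 (fun x => (q1 x)%:E) = 1%E)
  (* symmetric increments *)
  (q1_sym : forall x, q1 x = q1 (Z2_opp x))
  (* sub-Gaussian increments *)
  (q1_subG : exists c0 : R, 0 < c0 /\ forall (t : R) (a : 'I_2),
      (esumZ2 (fun x => (expR (t * Z2_coord R a x) * q1 x)%:E)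
        <= (expR (c0 * t ^+ 2 / 2))%:E)%E)
  (* the constant c of the context *)
  (c : R) (c_ge1 : 1 <= c)
  (hc1 : forall (t : R) (n : nat) (a : 'I_2), 0 <= t -> (0 < n)%N ->
      (esumZ2 (fun x => (expR (t * Z2_coord R a x) * qn q1 n x)%:E)
        <= (expR (c * t ^+ 2 * n%:R / 2))%:E)%E)
  (hc2 : forall (t : R) (n : nat) (a : 'I_2), 0 <= t -> (0 < n)%N ->
      (esumZ2 (fun x => (expR (t * Z2_coord R a x) * (qn q1 n x) ^+ 2
                          / qn q1 (2 * n) Z2_0)%:E)
        <= (expR (c * t ^+ 2 * n%:R / 2))%:E)%E)
  (hc3 : forall (t : R) (n : nat), 0 <= t -> (0 < n)%N ->
      (esumZ2 (fun x => (expR (t * Z2_norm R x) * qn q1 n x)%:E)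
        <= (c * expR (2 * c * t ^+ 2 * n%:R))%:E)%E)
  (hc4 : forall (t : R) (n : nat) (x : Z2), 0 <= t -> (0 < n)%N ->
      expR (t * Z2_norm R x) * qn q1 n x <= c * expR (2 * c * t ^+ 2 * n%:R) / n%:R)
  (f : Z2 -> R) (t : R) (n : nat) (p : \bar R)
  (ht : 0 <= t) (hn : (0 < n)%N) (hp : (1 <= p)%E) :
  (lpnorm p (fun x => (qfn q1 n f x / wt t x)%R)
     <= (c * expR (2 * c * t ^+ 2 * n%:R))%:E * lpnorm p (fun x => (f x / wt t x)%R))%E
  /\
  (lpnorm +oo%E (fun x => (qfn q1 n f x / wt t x)%R)
     <= (c * expR (2 * c * t ^+ 2 * n%:R) / nroot_p n p)%:E
        * lpnorm p (fun x => (f x / wt t x)%R))%E.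
Proof.
set C := c * expR _.
pose K y := expR (t * Z2_norm R y) * qn q1 n y.
have K_ge0 y : 0 <= K y by rewrite mulr_ge0 ?expR_ge0 ?qn_ge0.
have C_gt0 : 0 < C by rewrite mulr_gt0 ?expR_gt0// (lt_le_trans ltr01 c_ge1).
have esumK_le := hc3 t n ht hn.
have F_le x := weighted_qfn_le_econvZ2 q1_ge0 n f x ht.
case: p hp => [P| |] hp //.
- have P1 : 1 <= P by rewrite -lee_fin.
  split; first exact: (young_lp K_ge0 C_gt0 esumK_le F_le P1).
  have n_gt0 : 0 < n%:R :> R by rewrite ltr0n.
  rewrite /nroot_p /= -(powR_geometric_mean_div _ C_gt0 n_gt0).
  apply: (young_lp_linfty K_ge0 C_gt0 esumK_le F_le P1); first exact: divr_gt0.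
  by move=> y; exact: hc4.
- rewrite /nroot_p /= divr1.
  by split; exact: (young_linfty K_ge0 C_gt0 esumK_le F_le).
Qed.
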